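(* Let $C\subseteq[n]$ be a nonempty proper subset and let $\ket{\psi}=\ket{a}_C\otimes\ket{b}_{\overline{C}}$ be an $n$-qubit state, where $\ket{a}_C$ and $\ket{b}_{\overline{C}}$ are each $\epsilon$-far from every multipartite product state (on the qubits of $C$ and of $\overline{C}$ respectively). Let $S\subseteq[n]$ be a nonempty proper subset of the qubits. Then the reduced state $\psi_S$ on the qubits of $S$ satisfies $\mathrm{Tr}(\psi_S^2)=1$ if $S=C$ or $S=\overline{C}$, and otherwise $\mathrm{Tr}(\psi_S^2)\le1-\epsilon^2$.
   Context: $\overline{S}=[n]\setminus S$ for $S\subseteq[n]$. A state on a set $Q$ of qubits is multipartite product if it can be written as $\ket{a'}_D\otimes\ket{b'}_{Q\setminus D}$ for some nonempty proper subset $D\subsetneq Q$. A pure state $\ket{\phi}$ is $\epsilon$-far from a set $\mathcal{P}$ of pure states if $|\langle\phi|\chi\rangle|^2\le1-\epsilon^2$ for all $\ket{\chi}\in\mathcal{P}$ (equivalently trace distance at least $\epsilon$). *)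

(* Amplitudes live in an arbitrary numeric algebraically
   closed field K (e.g. algC or R[i]); conjugation is x^*. *)
From mathcomp Require Import all_boot all_order all_algebra.
Set Implicit Arguments. Unset Strict Implicit. Unset Printing Implicit Defensive.
Import Order.TTheory GRing.Theory Num.Theory.
Local Open Scope ring_scope.

Definition bits (n : nat) := {ffun 'I_n -> bool}.

(* Restriction of a basis string to the qubits in D (bits outside D set to 0).
   A basis string of the subsystem D is identified with a string x such that
   restr D x = x. *)
Definition restr n (D : {set 'I_n}) (x : bits n) : bits n :=
  [ffun i => (i \in D) && x i].

Definition on_set n (D : {set 'I_n}) (x : bits n) : bool := restr D x == x.

(* Juxtaposition of a string on D and a string on a disjoint set. *)
Definition merge n (x y : bits n) : bits n := [ffun i => x i || y i].

Section Q.
Variables (K : numClosedFieldType) (n : nat).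

(* A vector on the qubit set Q: amplitudes indexed by basis strings of Q
   (zero on strings not supported in Q). *)
Definition vec_on (Q : {set 'I_n}) (v : bits n -> K) : Prop :=
  forall x, ~~ on_set Q x -> v x = 0.

Definition inner (v w : bits n -> K) : K := \sum_(x : bits n) (v x)^* * w x.

Definition state_on (Q : {set 'I_n}) (v : bits n -> K) : Prop :=
  vec_on Q v /\ inner v v = 1.

Definition tens (D E : {set 'I_n}) (a b : bits n -> K) : bits n -> K :=
  fun x => if on_set (D :|: E) x then a (restr D x) * b (restr E x) else 0.

Definition multipartite_product (Q : {set 'I_n}) (chi : bits n -> K) : Prop :=
  exists D : {set 'I_n}, [/\ D != set0, D \proper Q &
    exists a b, [/\ state_on D a, state_on (Q :\: D) b & chi = tens D (Q :\: D) a b]].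

Definition far_from_product (eps : K) (Q : {set 'I_n}) (phi : bits n -> K) : Prop :=
  forall chi, state_on Q chi -> multipartite_product Q chi ->
    `|inner phi chi| ^+ 2 <= 1 - eps ^+ 2.

(* Reduced density matrix psi_S = Tr_{~S} |psi><psi|, with entries indexed
   by basis strings x, y of S. *)
Definition reduced (S : {set 'I_n}) (psi : bits n -> K) (x y : bits n) : K :=
  \sum_(z : bits n | on_set (~: S) z) psi (merge x z) * (psi (merge y z))^*.

Definition purity (S : {set 'I_n}) (psi : bits n -> K) : K :=
  \sum_(x : bits n | on_set S x) \sum_(y : bits n | on_set S y)
     reduced S psi x y * reduced S psi y x.

End Q.

(* Since psi = a (x) b across the cut (C, ~C), tracing out ~S factors, and
   Tr(psi_S^2) is the product of the purity of a across (S :&: C, ~S :&: C)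
   and that of b across (S :&: ~C, ~S :&: ~C).  A purity across a trivial
   bipartition is 1.  Across a nontrivial bipartition X | Y, view v as the
   X x Y matrix M: then Tr(rho_X^2) = sum_x' |M M^* e_x'|^2 <= s^2 |M|_F^2 = s^2,
   where s^2, the squared operator norm of M, is the largest overlap
   |<v, u (x) w>|^2 with a product of unit vectors, hence at most 1 - eps^2.
   If S is neither C nor ~C, it cuts C or ~C nontrivially. *)

From Pilot Require Import Defs.
From mathcomp Require Import all_boot all_order all_algebra.
From mathcomp Require Import ring.
Import Order.TTheory GRing.Theory Num.Theory.
Local Open Scope ring_scope.
Set Implicit Arguments. Unset Strict Implicit. Unset Printing Implicit Defensive.

(* path.v also exports a [merge] (of sorted sequences). *)
Local Notation merge := Pilot.Defs.merge.

Section BitStrings.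
Variable n : nat.
Implicit Types (C D E : {set 'I_n}) (x y : bits n).

Definition bits0 : bits n := [ffun => false].

Lemma on_setP D x : reflect (forall i, i \notin D -> x i = false) (on_set D x).
Proof.
apply: (iffP eqP) => [<- i Di | xD]; first by rewrite ffunE (negbTE Di).
by apply/ffunP => i; rewrite ffunE; case: (boolP (i \in D)) => //= /xD.
Qed.

Lemma on_set_bits0 D : on_set D bits0.
Proof. by apply/on_setP => i _; rewrite ffunE. Qed.

Lemma on_set0 x : on_set set0 x = (x == bits0).
Proof.
apply/idP/eqP => [/on_setP x0 | ->]; last exact: on_set_bits0.
by apply/ffunP => i; rewrite ffunE x0 ?inE.
Qed.

Lemma on_setS D E x : D \subset E -> on_set D x -> on_set E x.
Proof.
move=> /subsetP DE /on_setP xD; apply/on_setP => i Ei; apply: xD.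
by apply: contra Ei; apply: DE.
Qed.

Lemma on_set_restr D x : on_set D (restr D x).
Proof. by apply/on_setP => i Di; rewrite ffunE (negbTE Di). Qed.

Lemma restr_on_set D x : on_set D x -> restr D x = x.
Proof. exact/eqP. Qed.

Lemma restr_merge D x y : restr D (merge x y) = merge (restr D x) (restr D y).
Proof. by apply/ffunP => i; rewrite !ffunE; case: (i \in D). Qed.

Lemma mergeb0 x : merge x bits0 = x.
Proof. by apply/ffunP => i; rewrite !ffunE orbF. Qed.

Lemma merge0b x : merge bits0 x = x.
Proof. by apply/ffunP => i; rewrite !ffunE. Qed.

Lemma on_setU_merge D E x y : on_set D x -> on_set E y -> on_set (D :|: E) (merge x y).
Proof.
move=> /on_setP xD /on_setP yE; apply/on_setP => i.
by rewrite inE negb_or => /andP[Di Ei]; rewrite ffunE xD // yE.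
Qed.

Lemma merge_restr D E x : on_set (D :|: E) x -> merge (restr D x) (restr E x) = x.
Proof.
move=> /on_setP xDE; apply/ffunP => i; rewrite !ffunE.
have := xDE i; rewrite inE negb_or.
by case: (i \in D); case: (i \in E); case: (x i) => //= /(_ isT).
Qed.

Lemma restr_disjoint D E x : [disjoint D & E] -> on_set E x -> restr D x = bits0.
Proof.
move=> dDE /on_setP xE; apply/ffunP => i; rewrite !ffunE.
by case: (boolP (i \in D)) => //= Di; rewrite xE // (disjointFr dDE Di).
Qed.

Lemma restr_mergel D E x y : [disjoint D & E] -> on_set D x -> on_set E y ->
  restr D (merge x y) = x.
Proof.
by move=> dDE xD yE; rewrite restr_merge restr_on_set // (restr_disjoint dDE yE) mergeb0.
Qed.

Lemma restr_merger D E x y : [disjoint D & E] -> on_set D x -> on_set E y ->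
  restr E (merge x y) = y.
Proof.
move=> dDE xD yE; rewrite disjoint_sym in dDE.
by rewrite restr_merge (restr_on_set yE) (restr_disjoint dDE xD) merge0b.
Qed.

Lemma restr_setIC C D x : on_set (D :&: C) x -> restr C x = x /\ restr (~: C) x = bits0.
Proof.
move=> xDC; have xC := on_setS (subsetIr D C) xDC.
by rewrite restr_on_set // (restr_disjoint _ xC) // disjoints_subset.
Qed.

Lemma disjoint_setIC C D E : [disjoint D :&: C & E :&: ~: C].
Proof.
apply: disjointWl (subsetIr _ _) _; apply: disjointWr (subsetIr _ _) _.
by rewrite disjoints_subset setCK.
Qed.

Lemma big_on_setU (R : nmodType) D E (F : bits n -> R) : [disjoint D & E] ->
  \sum_(z | on_set (D :|: E) z) F z =
  \sum_(x | on_set D x) \sum_(y | on_set E y) F (merge x y).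
Proof.
move=> dDE.
rewrite (partition_big (restr D) (on_set D)); last by move=> z _; apply: on_set_restr.
apply: eq_bigr => x xD.
rewrite (reindex_onto (merge x) (restr E)); last first.
  by move=> z /andP[zDE /eqP <-]; apply: merge_restr.
apply: eq_bigl => y; apply/idP/idP => [/andP[_ /eqP <-] | yE]; first exact: on_set_restr.
by rewrite on_setU_merge // (restr_mergel dDE) // (restr_merger dDE) // !eqxx.
Qed.

End BitStrings.

Section Amplitudes.
Variables (K : numClosedFieldType) (n : nat).
Implicit Types (C D X Y Q : {set 'I_n}) (x y : bits n) (a b u v w : bits n -> K).

Lemma inner_normE u : inner u u = \sum_x `|u x| ^+ 2.
Proof. by apply: eq_bigr => x _; rewrite normCK mulrC. Qed.

Lemma inner_self_ge0 u : 0 <= inner u u.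
Proof. by rewrite inner_normE; apply: sumr_ge0 => x _; apply: exprn_ge0. Qed.

Lemma inner_self_eq0 u : inner u u = 0 -> forall x, u x = 0.
Proof.
rewrite inner_normE => u0 x.
have ux0 : `|u x| ^+ 2 = 0.
  by apply: (psumr_eq0P _ u0) => // y _; apply: exprn_ge0.
by move/eqP: ux0; rewrite expf_eq0 /= normr_eq0 => /eqP.
Qed.

Lemma innerZ c d u w :
  inner (fun x => c * u x) (fun x => d * w x) = c^* * d * inner u w.
Proof. by rewrite /inner mulr_sumr; apply: eq_bigr => x _; rewrite rmorphM; ring. Qed.

Lemma inner_on_set Q u w : vec_on Q w ->
  inner u w = \sum_(x | on_set Q x) (u x)^* * w x.
Proof.
move=> wQ; rewrite /inner (bigID (on_set Q)) /= [X in _ + X]big1 ?addr0 //.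
by move=> x /wQ ->; rewrite mulr0.
Qed.

Lemma state_normE Q v : state_on Q v -> \sum_(x | on_set Q x) `|v x| ^+ 2 = 1.
Proof.
move=> [vQ v1]; rewrite -v1 (inner_on_set _ vQ).
by apply: eq_bigr => x _; rewrite normCK mulrC.
Qed.

Lemma normalize_state Q u : vec_on Q u -> inner u u != 0 ->
  state_on Q (fun x => (sqrtC (inner u u))^-1 * u x).
Proof.
move=> uQ u_neq0; split; first by move=> x /uQ ->; rewrite mulr0.
rewrite innerZ geC0_conj ?invr_ge0 ?sqrtC_ge0 ?inner_self_ge0 //.
by rewrite -expr2 exprVn sqrtCK mulVf.
Qed.

Lemma basis0_state Q : state_on Q (fun x => (x == bits0 n)%:R : K).
Proof.
split=> [x xQ | ]; first by case: eqP xQ => // ->; rewrite on_set_bits0.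
rewrite /inner (bigD1 (bits0 n)) //= eqxx big1 ?addr0; first by rewrite rmorph1 mulr1.
by move=> x /negbTE ->; rewrite mulr0.
Qed.

Lemma tens_merge X Y u w x y : [disjoint X & Y] -> on_set X x -> on_set Y y ->
  tens X Y u w (merge x y) = u x * w y.
Proof.
move=> dXY xX yY.
by rewrite /tens on_setU_merge // (restr_mergel dXY) // (restr_merger dXY).
Qed.

Lemma tens_vec_on X Y u w : vec_on (X :|: Y) (tens X Y u w).
Proof. by move=> z /negbTE zXY; rewrite /tens zXY. Qed.

Lemma inner_tens v X Y u w : [disjoint X & Y] ->
  inner v (tens X Y u w) =
  \sum_(x | on_set X x) \sum_(y | on_set Y y) (v (merge x y))^* * (u x * w y).
Proof.
move=> dXY; rewrite (inner_on_set _ (@tens_vec_on X Y u w)) big_on_setU //.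
by apply: eq_bigr => x xX; apply: eq_bigr => y yY; rewrite tens_merge.
Qed.

Lemma inner_tensZ v X Y c d u w :
  inner v (tens X Y (fun x => c * u x) (fun y => d * w y)) =
  c * d * inner v (tens X Y u w).
Proof.
rewrite /inner mulr_sumr; apply: eq_bigr => z _.
by rewrite /tens; case: ifP => _; [ring | rewrite !mulr0].
Qed.

Lemma tens_state X Y u w : [disjoint X & Y] -> state_on X u -> state_on Y w ->
  state_on (X :|: Y) (tens X Y u w).
Proof.
move=> dXY uX wY; split; first exact: tens_vec_on.
rewrite -[1](mulr1 1) -{1}(state_normE uX) -(state_normE wY) big_distrlr inner_tens //=.
apply: eq_bigr => x xX; apply: eq_bigr => y yY.
by rewrite tens_merge // !normCK rmorphM; ring.
Qed.

(* [ptrace v Y] is the matrix of Tr_Y |v><v|. *)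
Definition ptrace v Y x x' : K :=
  \sum_(y | on_set Y y) v (merge x y) * (v (merge x' y))^*.

Definition bipartite_purity v X Y : K :=
  \sum_(x | on_set X x) \sum_(x' | on_set X x') ptrace v Y x x' * ptrace v Y x' x.

Lemma purityE S v : purity S v = bipartite_purity v S (~: S).
Proof. by []. Qed.

Lemma ptrace_conj v Y x x' : (ptrace v Y x x')^* = ptrace v Y x' x.
Proof.
rewrite /ptrace rmorph_sum; apply: eq_bigr => y _.
by rewrite rmorphM /= conjCK mulrC.
Qed.

Lemma bipartite_purity_normE v X Y : bipartite_purity v X Y =
  \sum_(x | on_set X x) \sum_(x' | on_set X x') `|ptrace v Y x x'| ^+ 2.
Proof.
by apply: eq_bigr => x _; apply: eq_bigr => x' _; rewrite normCK ptrace_conj.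
Qed.

Lemma bipartite_purity_ge0 v X Y : 0 <= bipartite_purity v X Y.
Proof.
rewrite bipartite_purity_normE.
by apply: sumr_ge0 => x _; apply: sumr_ge0 => x' _; apply: exprn_ge0.
Qed.

Lemma big_on_set0 (F : bits n -> K) : \sum_(x | on_set set0 x) F x = F (bits0 n).
Proof. by apply: big_pred1 => x; rewrite on_set0. Qed.

Lemma bipartite_purity_set0r Q v : state_on Q v -> bipartite_purity v Q set0 = 1.
Proof.
move=> vQ; rewrite bipartite_purity_normE -[1](mulr1 1) -(state_normE vQ) big_distrlr.
apply: eq_bigr => x _; apply: eq_bigr => x' _.
by rewrite /ptrace big_on_set0 !mergeb0 normrM norm_conjC exprMn.
Qed.

Lemma bipartite_purity_set0l Q v : state_on Q v -> bipartite_purity v set0 Q = 1.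
Proof.
move=> vQ; rewrite /bipartite_purity !big_on_set0.
suff -> : ptrace v Q (bits0 n) (bits0 n) = 1 by rewrite mulr1.
by rewrite -(state_normE vQ); apply: eq_bigr => y _; rewrite merge0b normCK.
Qed.

Lemma tens_setC C a b z : tens C (~: C) a b z = a (restr C z) * b (restr (~: C) z).
Proof.
have zT : on_set [set: 'I_n] z by apply/on_setP => i; rewrite inE.
by rewrite /tens setUCr zT.
Qed.

Lemma ptrace_tens C Y a b x x' :
  ptrace (tens C (~: C) a b) Y x x' =
  ptrace a (Y :&: C) (restr C x) (restr C x') *
  ptrace b (Y :&: ~: C) (restr (~: C) x) (restr (~: C) x').
Proof.
have YE : Y = (Y :&: C) :|: (Y :&: ~: C) by rewrite -setIUr setUCr setIT.
rewrite /ptrace {1}YE big_on_setU ?disjoint_setIC // big_distrlr /=.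
apply: eq_bigr => y1 y1C; apply: eq_bigr => y2 y2C'.
have [y1_C y1_C'] := restr_setIC y1C.
have [y2_C' ] := restr_setIC y2C'; rewrite setCK => y2_C.
rewrite !tens_setC !restr_merge y1_C y1_C' y2_C y2_C' mergeb0 merge0b rmorphM.
ring.
Qed.

Lemma bipartite_purity_tens C X Y a b :
  bipartite_purity (tens C (~: C) a b) X Y =
  bipartite_purity a (X :&: C) (Y :&: C) *
  bipartite_purity b (X :&: ~: C) (Y :&: ~: C).
Proof.
have XE : X = (X :&: C) :|: (X :&: ~: C) by rewrite -setIUr setUCr setIT.
rewrite /bipartite_purity {1}XE big_on_setU ?disjoint_setIC // mulr_suml.
apply: eq_bigr => x1 x1C.
under eq_bigr => x2 _ do rewrite {1}XE big_on_setU ?disjoint_setIC //.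
rewrite exchange_big /= mulr_suml; apply: eq_bigr => x1' x1'C.
rewrite mulr_sumr; apply: eq_bigr => x2 x2C'.
rewrite mulr_sumr; apply: eq_bigr => x2' x2'C'.
have [x1_C x1_C'] := restr_setIC x1C; have [x1'_C x1'_C'] := restr_setIC x1'C.
have [x2_C' ] := restr_setIC x2C'; rewrite setCK => x2_C.
have [x2'_C' ] := restr_setIC x2'C'; rewrite setCK => x2'_C.
rewrite !ptrace_tens !restr_merge x1_C x1_C' x2_C x2_C' x1'_C x1'_C' x2'_C x2'_C'.
by rewrite !mergeb0 !merge0b; ring.
Qed.

Section ProductOverlapBound.
Variables (v : bits n -> K) (X Y : {set 'I_n}) (m : K).
Hypothesis dXY : [disjoint X & Y].
Hypothesis overlap_le : forall u w, state_on X u -> state_on Y w ->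
  `|inner v (tens X Y u w)| ^+ 2 <= m.

Lemma overlap_bound_ge0 : 0 <= m.
Proof.
by apply: le_trans (overlap_le (basis0_state X) (basis0_state Y)); apply: exprn_ge0.
Qed.

Lemma overlap_le_norm u w : vec_on X u -> vec_on Y w ->
  `|inner v (tens X Y u w)| ^+ 2 <= m * (inner u u * inner w w).
Proof.
move=> uX wY.
have [u0 | u_neq0] := eqVneq (inner u u) 0.
  rewrite u0 mul0r mulr0 inner_tens // big1 ?normr0 ?expr0n // => x _.
  by rewrite big1 // => y _; rewrite (inner_self_eq0 u0) mul0r mulr0.
have [w0 | w_neq0] := eqVneq (inner w w) 0.
  rewrite w0 mulr0 mulr0 inner_tens // big1 ?normr0 ?expr0n // => x _.
  by rewrite big1 // => y _; rewrite (inner_self_eq0 w0) !mulr0.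
have norm_inv_sqrt (f : bits n -> K) : `|(sqrtC (inner f f))^-1| ^+ 2 = (inner f f)^-1.
  by rewrite normfV ger0_norm ?sqrtC_ge0 ?inner_self_ge0 // exprVn sqrtCK.
have := overlap_le (normalize_state uX u_neq0) (normalize_state wY w_neq0).
rewrite inner_tensZ !normrM !exprMn !norm_inv_sqrt -invfM ler_pdivrMl.
  by rewrite mulrC.
by rewrite lt_def mulf_neq0 // mulr_ge0 ?inner_self_ge0.
Qed.

Lemma contraction_le w :
  \sum_(x | on_set X x) `|\sum_(y | on_set Y y) v (merge x y) * w y| ^+ 2
  <= m * \sum_(y | on_set Y y) `|w y| ^+ 2.
Proof.
(* Testing the overlap bound on M w and conj w gives |M w|^4 <= m |M w|^2 |w|^2. *)
pose Mw x := if on_set X x then \sum_(y | on_set Y y) v (merge x y) * w y else 0.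
pose cw y := if on_set Y y then (w y)^* else 0.
have MwX : vec_on X Mw by move=> x /negbTE; rewrite /Mw => ->.
have cwY : vec_on Y cw by move=> y /negbTE; rewrite /cw => ->.
have normMw : inner Mw Mw =
    \sum_(x | on_set X x) `|\sum_(y | on_set Y y) v (merge x y) * w y| ^+ 2.
  by rewrite (inner_on_set _ MwX); apply: eq_bigr => x xX; rewrite /Mw xX normCK mulrC.
have normcw : inner cw cw = \sum_(y | on_set Y y) `|w y| ^+ 2.
  by rewrite (inner_on_set _ cwY); apply: eq_bigr => y yY; rewrite /cw yY conjCK normCK.
have overlapMw : inner v (tens X Y Mw cw) = inner Mw Mw.
  rewrite inner_tens // (inner_on_set _ MwX); apply: eq_bigr => x xX.
  rewrite /Mw xX rmorph_sum mulr_suml; apply: eq_bigr => y yY.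
  by rewrite /cw yY rmorphM; ring.
have := overlap_le_norm MwX cwY; rewrite overlapMw -normMw -normcw.
have [-> | Mw_neq0] := eqVneq (inner Mw Mw) 0.
  by rewrite mulr_ge0 ?overlap_bound_ge0 ?inner_self_ge0.
rewrite ger0_norm ?inner_self_ge0 // expr2 mulrCA ler_pM2l //.
by rewrite lt_def Mw_neq0 inner_self_ge0.
Qed.

Lemma bipartite_purity_le : state_on (X :|: Y) v -> bipartite_purity v X Y <= m.
Proof.
move=> v_state; rewrite bipartite_purity_normE exchange_big /=.
apply: (@le_trans _ _ (\sum_(x' | on_set X x')
    m * \sum_(y | on_set Y y) `|(v (merge x' y))^*| ^+ 2)).
  by apply: ler_sum => x' _; apply: contraction_le.
rewrite -mulr_sumr -[leRHS]mulr1 -(state_normE v_state) (big_on_setU _ dXY).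
by under eq_bigr => x _ do under eq_bigr => y _ do rewrite norm_conjC.
Qed.
End ProductOverlapBound.

Lemma far_from_product_overlap eps Q v X Y u w :
  far_from_product eps Q v -> [disjoint X & Y] -> X :|: Y = Q ->
  X != set0 -> Y != set0 -> state_on X u -> state_on Y w ->
  `|inner v (tens X Y u w)| ^+ 2 <= 1 - eps ^+ 2.
Proof.
move=> v_far dXY XYQ X0 Y0 uX wY; subst Q; apply: v_far; first exact: tens_state.
have dYX : [disjoint Y & X] by rewrite disjoint_sym.
exists X; split=> //.
  apply: properUl; apply: contra Y0 => YX.
  by rewrite -(setIidPl YX) (disjoint_setI0 dYX).
by exists u, w; rewrite setDUl setDv set0U (setDidPl dYX).
Qed.

Lemma bipartite_purity_far eps Q v X Y :
  far_from_product eps Q v -> state_on Q v -> [disjoint X & Y] -> X :|: Y = Q ->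
  X != set0 -> Y != set0 -> bipartite_purity v X Y <= 1 - eps ^+ 2.
Proof.
move=> v_far vQ dXY XYQ X0 Y0; apply: bipartite_purity_le; rewrite ?XYQ //.
by move=> u w; apply: (far_from_product_overlap v_far).
Qed.

Lemma bipartite_purity_cases eps Q v X Y :
  far_from_product eps Q v -> state_on Q v -> [disjoint X & Y] -> X :|: Y = Q ->
  (X = set0 \/ Y = set0) /\ bipartite_purity v X Y = 1 \/
  bipartite_purity v X Y <= 1 - eps ^+ 2.
Proof.
move=> v_far vQ dXY XYQ; subst Q.
have [X0 | X_neq0] := eqVneq X set0.
  by rewrite X0 set0U in vQ *; left; split; [left | apply: bipartite_purity_set0l].
have [Y0 | Y_neq0] := eqVneq Y set0.
  by rewrite Y0 setU0 in vQ *; left; split; [right | apply: bipartite_purity_set0r].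
by right; apply: (bipartite_purity_far v_far).
Qed.

End Amplitudes.

Lemma setIC_set0_cases (T : finType) (S C : {set T}) :
  S :&: C = set0 \/ ~: S :&: C = set0 ->
  S :&: ~: C = set0 \/ ~: S :&: ~: C = set0 ->
  [\/ S = set0, S = C, S = ~: C | S = setT].
Proof.
move=> [] /setP SC [] /setP SC';
  [apply: Or41 | apply: Or43 | apply: Or42 | apply: Or44];
  apply/setP => i; move: (SC i) (SC' i); rewrite !inE;
  by case: (i \in S); case: (i \in C).
Qed.

Unset Implicit Arguments.
Theorem proposition2p17 (K : numClosedFieldType) (n : nat) (eps : K)
  (C : {set 'I_n}) (a b : bits n -> K) (S : {set 'I_n}) :
  eps \is Num.real ->
  C != set0 -> C \proper [set: 'I_n] ->
  state_on C a -> state_on (~: C) b ->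
  far_from_product eps C a -> far_from_product eps (~: C) b ->
  S != set0 -> S \proper [set: 'I_n] ->
  let psi := tens C (~: C) a b in
  ((S = C \/ S = ~: C) -> purity S psi = 1) /\
  (S <> C -> S <> ~: C -> purity S psi <= 1 - eps ^+ 2).
Proof.
move=> eps_real _ _ a_state b_state a_far b_far S_neq0 S_proper psi.
rewrite /psi purityE bipartite_purity_tens; split.
  by case=> ->; rewrite ?setCK !setIid (setIC (~: C)) setICr
    ?bipartite_purity_set0l ?bipartite_purity_set0r // mulr1.
move=> S_neq_C S_neq_C'.
have dS D : [disjoint S :&: D & ~: S :&: D].
  by rewrite setIC [~: S :&: D]setIC disjoint_setIC.
have US D : (S :&: D) :|: (~: S :&: D) = D by rewrite -setIUl setUCr setTI.
have [[a_triv a_pur] | a_le] := bipartite_purity_cases a_far a_state (dS C) (US C);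
have [[b_triv b_pur] | b_le] := bipartite_purity_cases b_far b_state (dS _) (US _).
- have [S0 | // | // | ST] := setIC_set0_cases a_triv b_triv.
    by rewrite S0 eqxx in S_neq0.
  by rewrite ST properT eqxx in S_proper.
- by rewrite a_pur mul1r.
- by rewrite b_pur mulr1.
- apply: le_trans a_le; apply: ler_piMr; first exact: bipartite_purity_ge0.
  by apply: le_trans b_le _; rewrite gerBl -realEsqr.
Qed.
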